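(* Let $(\mathfrak g,[\cdot,\cdot]_{\mathfrak g},E)$ be an ENL algebra, $(W;T,\rho)$ an ENE-representation of it, and $K:W\to\mathfrak g$ an ENE-relative Rota–Baxter operator with respect to $(W;T,\rho)$. Then $(W,\{\cdot,\cdot\}_K,T)$ is a pre-ENL algebra, where $\{u,v\}_K=\rho(Ku)v$ for $u,v\in W$.
   Context: Vector spaces are finite-dimensional over an algebraically closed field of characteristic zero. An ENL algebra is a Lie algebra with linear $E$ satisfying $E[x,y]=[x,Ey]$ for all $x,y$. An ENE-representation $(W;T,\rho)$ is a representation $\rho:\mathfrak g\to\mathfrak{gl}(W)$ with linear $T$ such that $T(\rho(x)u)=\rho(Ex)u=\rho(x)(Tu)$. An ENE-relative Rota–Baxter operator is a linear $K:W\to\mathfrak g$ with $[Ku,Kv]_{\mathfrak g}=K(\rho(Ku)v-\rho(Kv)u)$ for all $u,v\in W$ and $E\circ K=K\circ T$. A pre-Lie algebra is a vector space with bilinear product $\{\cdot,\cdot\}$ satisfying $\{\{x,y\},z\}-\{x,\{y,z\}\}=\{\{y,x\},z\}-\{y,\{x,z\}\}$; a pre-ENL algebra $(A,\{\cdot,\cdot\},T)$ is a pre-Lie algebra with linear $T$ such that $T\{u,v\}=\{Tu,v\}=\{u,Tv\}$ for all $u,v$. *)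

From HB Require Import structures.
From mathcomp Require Import all_boot all_order all_algebra.
Set Implicit Arguments. Unset Strict Implicit. Unset Printing Implicit Defensive.
Import GRing.Theory.
Local Open Scope ring_scope.

Definition is_lie_bracket (F : fieldType) (g : vectType F) (br : g -> g -> g) :=
  [/\ (forall x, linear (br x)),
      (forall y, linear (br^~ y)),
      (forall x, br x x = 0) &
      (forall x y z, br x (br y z) + br y (br z x) + br z (br x y) = 0)].

Definition is_ENL (F : fieldType) (g : vectType F) (br : g -> g -> g) (E : g -> g) :=
  [/\ is_lie_bracket br, linear E & forall x y, E (br x y) = br x (E y)].

Definition is_rep (F : fieldType) (g W : vectType F) (br : g -> g -> g)
  (rho : g -> W -> W) :=
  [/\ (forall x, linear (rho x)),
      (forall u, linear (rho^~ u)) &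
      (forall x y u, rho (br x y) u = rho x (rho y u) - rho y (rho x u))].

Definition is_ENE_rep (F : fieldType) (g W : vectType F) (br : g -> g -> g)
  (E : g -> g) (T : W -> W) (rho : g -> W -> W) :=
  [/\ is_rep br rho, linear T &
      forall x u, T (rho x u) = rho (E x) u /\ rho (E x) u = rho x (T u)].

Definition is_ENE_RB (F : fieldType) (g W : vectType F) (br : g -> g -> g)
  (E : g -> g) (T : W -> W) (rho : g -> W -> W) (K : W -> g) :=
  [/\ linear K,
      (forall u v, br (K u) (K v) = K (rho (K u) v - rho (K v) u)) &
      (forall u, E (K u) = K (T u))].

Definition is_preLie (F : fieldType) (A : vectType F) (pr : A -> A -> A) :=
  [/\ (forall x, linear (pr x)),
      (forall y, linear (pr^~ y)) &
      (forall x y z, pr (pr x y) z - pr x (pr y z) = pr (pr y x) z - pr y (pr x z))].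

Definition is_preENL (F : fieldType) (A : vectType F) (pr : A -> A -> A) (T : A -> A) :=
  [/\ is_preLie pr, linear T &
      forall u v, T (pr u v) = pr (T u) v /\ pr (T u) v = pr u (T v)].

Definition prod_K (F : fieldType) (g W : vectType F) (rho : g -> W -> W) (K : W -> g) :=
  fun u v : W => rho (K u) v.

From mathcomp Require Import all_boot all_order all_algebra.
Set Implicit Arguments. Unset Strict Implicit. Unset Printing Implicit Defensive.
Import GRing.Theory.
Local Open Scope ring_scope.

(* With {u,v} = rho(Ku) v, linearity of rho and K gives
   {{u,v},w} - {{v,u},w} = rho(K({u,v} - {v,u})) w, the Rota-Baxter identity
   rewrites K({u,v} - {v,u}) as [Ku,Kv], and since rho is a representation
   this equals {u,{v,w}} - {v,{u,w}}: the pre-Lie identity.  Compatibility of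
   T with {,} comes from moving T through rho and K by the ENE-identities. *)

Lemma linearB_fun (F : fieldType) (U V : lmodType F) (f : U -> V) :
  linear f -> forall x y, f (x - y) = f x - f y.
Proof.
move=> f_lin x y.
by rewrite -[x - y]addrC -scaleN1r f_lin scaleN1r addrC.
Qed.

Section RelativeRotaBaxter.

Variables (F : fieldType) (g W : vectType F).
Variables (br : g -> g -> g) (E : g -> g) (T : W -> W).
Variables (rho : g -> W -> W) (K : W -> g).
Hypothesis rho_rep : is_rep br rho.
Hypothesis K_linear : linear K.
Hypothesis K_RotaBaxter :
  forall u v, br (K u) (K v) = K (rho (K u) v - rho (K v) u).

Local Notation "{ u , v }" := (prod_K rho K u v).

Lemma prod_K_linearr u : linear (prod_K rho K u).
Proof. by case: rho_rep => rho_linr _ _; apply: rho_linr. Qed.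

Lemma prod_K_linearl v : linear ((prod_K rho K)^~ v).
Proof.
case: rho_rep => _ rho_linl _ a u w.
by rewrite /prod_K K_linear rho_linl.
Qed.

Lemma prod_K_preLie_identity x y z :
  {{x, y}, z} - {x, {y, z}} = {{y, x}, z} - {y, {x, z}}.
Proof.
case: rho_rep => _ rho_linl rho_morph.
have assoc_diff : {{x, y}, z} - {{y, x}, z} = {x, {y, z}} - {y, {x, z}}.
  rewrite /prod_K -(linearB_fun (rho_linl z)) -(linearB_fun K_linear).
  by rewrite -K_RotaBaxter rho_morph.
apply/eqP; rewrite subr_eq addrAC -addrA -assoc_diff.
by rewrite addrC subrK.
Qed.

Lemma prod_K_preLie : is_preLie (prod_K rho K).
Proof.
split; [exact: prod_K_linearr | exact: prod_K_linearl |].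
exact: prod_K_preLie_identity.
Qed.

Lemma prod_K_preENL :
  is_ENE_rep br E T rho -> (forall u, E (K u) = K (T u)) ->
  is_preENL (prod_K rho K) T.
Proof.
move=> [_ T_linear T_rho] E_K.
split=> //; first exact: prod_K_preLie.
move=> u v; have [T_rho_l T_rho_r] := T_rho (K u) v.
by rewrite /prod_K -E_K T_rho_l; split.
Qed.

End RelativeRotaBaxter.

Theorem proposition7p5 (F : closedFieldType) (hF : [pchar F]%R =i pred0)
  (g W : vectType F) (br : g -> g -> g) (E : g -> g)
  (T : W -> W) (rho : g -> W -> W) (K : W -> g) :
  is_ENL br E -> is_ENE_rep br E T rho -> is_ENE_RB br E T rho K ->
  is_preENL (prod_K rho K) T.
Proof.
move=> _ ENE_rep [K_linear K_RotaBaxter E_K].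
have [rho_rep _ _] := ENE_rep.
exact: (prod_K_preENL rho_rep K_linear K_RotaBaxter ENE_rep E_K).
Qed.
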